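(* Let $K$ be a field of characteristic $p>0$ such that $K/k$ is a finitely generated field extension, where $k=\bigcap_{n\ge0}K^{p^n}$. If $K\neq k$, then $\operatorname{Diff}_k(K)$ is not finitely generated as a $K$-algebra.
   Context: $\operatorname{Diff}_k(K)$ is the union over $n\ge0$ of the sets of $k$-linear maps $D:K\to K$ with $[b_0,[b_1,[\ldots,[b_n,D]\ldots]]]=0$ for all $b_i\in K$ (elements acting by multiplication, $[X,Y]=XY-YX$); it is a ring under composition containing $K$. *)

From HB Require Import structures.
From mathcomp Require Import all_boot all_order all_algebra.
Set Implicit Arguments. Unset Strict Implicit. Unset Printing Implicit Defensive.
Import GRing.Theory.
Local Open Scope ring_scope.

Section DiffOps.
Variable K : fieldType.

Definition perfect_core (p : nat) : K -> Prop :=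
  fun x => forall n : nat, exists y : K, y ^+ (p ^ n) = x.

Inductive field_gen (k : K -> Prop) (xs : seq K) : K -> Prop :=
| fg_base x : k x -> field_gen k xs x
| fg_gen x : x \in xs -> field_gen k xs x
| fg_add x y : field_gen k xs x -> field_gen k xs y -> field_gen k xs (x + y)
| fg_opp x : field_gen k xs x -> field_gen k xs (- x)
| fg_mul x y : field_gen k xs x -> field_gen k xs y -> field_gen k xs (x * y)
| fg_inv x : field_gen k xs x -> field_gen k xs (x^-1).

Definition fin_gen_ext (k : K -> Prop) : Prop :=
  exists xs : seq K, forall x : K, field_gen k xs x.

Definition klinear (k : K -> Prop) (D : K -> K) : Prop :=
  (forall x y, D (x + y) = D x + D y) /\
  (forall c x, k c -> D (c * x) = c * D x).

Definition commK (b : K) (D : K -> K) : K -> K := fun x => b * D x - D (b * x).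

Definition diff_order (n : nat) (D : K -> K) : Prop :=
  forall bs : seq K, size bs = n.+1 -> forall x, foldr commK D bs x = 0.

Definition is_diffop (k : K -> Prop) (D : K -> K) : Prop :=
  klinear k D /\ exists n, diff_order n D.

(* K-subalgebra of End(K) generated by K (acting by multiplication) and
   the maps in gens: closure under +, composition *)
Inductive alg_gen (m : nat) (gens : 'I_m -> K -> K) : (K -> K) -> Prop :=
| ag_scal (b : K) : alg_gen gens (fun x => b * x)
| ag_gen i : alg_gen gens (gens i)
| ag_add D E : alg_gen gens D -> alg_gen gens E -> alg_gen gens (fun x => D x + E x)
| ag_comp D E : alg_gen gens D -> alg_gen gens E -> alg_gen gens (fun x => D (E x)).

Definition diff_fin_gen (k : K -> Prop) : Prop :=
  exists (m : nat) (gens : 'I_m -> K -> K),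
    (forall i, is_diffop k (gens i)) /\
    (forall D, is_diffop k D -> exists E, alg_gen gens E /\ E =1 D).

End DiffOps.

(* A differential operator of order < p^e commutes with multiplication by
   p^e-th powers: iterating [b, -] p^e times gives (b - R_b)^(p^e) =
   b^(p^e) - R_(b^(p^e)), R_b denoting precomposition with b.  So the algebra
   generated by K and finitely many differential operators consists of
   K^(p^n)-linear maps for a single n.  Conversely, if K = k(x_1, ..., x_r)
   then K is spanned over K^(p^e) by the monomials in the x_i with exponents
   < p^e, and every K^(p^e)-linear map has order <= r(p^e - 1): expanding
   commutators with monomials into commutators with the x_i, any
   r(p^e - 1) + 1 of them contain p^e equal ones, which act as
   [x_i^(p^e), -] = 0.  Finally, K <> k yields u not in K^p, so
   t = u^(p^n) is not in K^(p^(n+1)), and a K^(p^(n+1))-linear map killing t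
   and fixing 1 is a differential operator that is not K^(p^n)-linear. *)

From mathcomp Require Import all_boot all_order all_algebra.
From mathcomp Require Import ring zify.
From Stdlib Require Import Classical ClassicalEpsilon.
Set Implicit Arguments. Unset Strict Implicit. Unset Printing Implicit Defensive.
Import GRing.Theory.
Local Open Scope ring_scope.

Section Commutators.
Variable K : fieldType.
Implicit Types (a b c y : K) (D E F : K -> K) (l : seq K) (P Q : {poly K}).

Lemma eq_commK b E F : E =1 F -> commK b E =1 commK b F.
Proof. by move=> eEF x; rewrite /commK !eEF. Qed.

Lemma eq_foldr_commK l E F : E =1 F -> foldr (@commK K) E l =1 foldr (@commK K) F l.
Proof. by elim: l => //= b l IHl eEF; apply/eq_commK/IHl. Qed.

Lemma commKC a b E : commK a (commK b E) =1 commK b (commK a E).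
Proof. by move=> x; rewrite /commK [b * (a * x)]mulrCA; ring. Qed.

Lemma foldr_commK_commK l b E :
  foldr (@commK K) (commK b E) l =1 commK b (foldr (@commK K) E l).
Proof.
by elim: l => //= a l IHl x; rewrite (eq_commK _ IHl) commKC.
Qed.

Lemma foldr_commKC l1 l2 E :
  foldr (@commK K) (foldr (@commK K) E l2) l1 =1
  foldr (@commK K) (foldr (@commK K) E l1) l2.
Proof.
elim: l1 => //= b l1 IHl1 x.
by rewrite (eq_commK _ IHl1) -foldr_commK_commK.
Qed.

Lemma perm_foldr_commK l1 l2 E :
  perm_eq l1 l2 -> foldr (@commK K) E l1 =1 foldr (@commK K) E l2.
Proof.
pose P l := foldr (@commK K) E l1 =1 foldr (@commK K) E l.
move=> pl; apply: (@catCA_perm_ind _ P) pl _ => // s1 s2 s3 eq_s x.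
by rewrite eq_s !foldr_cat foldr_commKC.
Qed.

Lemma foldr_commK_eq0 l E : E =1 (fun=> 0) -> foldr (@commK K) E l =1 (fun=> 0).
Proof.
by move=> E0; elim: l => //= b l IHl x; rewrite (eq_commK _ IHl) /commK mulr0 subr0.
Qed.

Lemma foldr_commK_add l E F :
  foldr (@commK K) (fun x => E x + F x) l =1
  (fun x => foldr (@commK K) E l x + foldr (@commK K) F l x).
Proof. by elim: l => //= b l IHl x; rewrite (eq_commK _ IHl) /commK; ring. Qed.

Lemma foldr_commK_mull l a E :
  foldr (@commK K) (fun x => a * E x) l =1 (fun x => a * foldr (@commK K) E l x).
Proof. by elim: l => //= b l IHl x; rewrite (eq_commK _ IHl) /commK; ring. Qed.

Lemma foldr_commK_mulr l a E :
  foldr (@commK K) (fun x => E (a * x)) l =1 (fun x => foldr (@commK K) E l (a * x)).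
Proof. by elim: l => //= b l IHl x; rewrite (eq_commK _ IHl) /commK mulrCA. Qed.

Lemma commKD a b E : {morph E : x y / x + y} ->
  commK (a + b) E =1 (fun x => commK a E x + commK b E x).
Proof. by move=> ED x; rewrite /commK !mulrDl ED; ring. Qed.

Lemma commKM a b E :
  commK (a * b) E =1 (fun x => a * commK b E x + commK a E (b * x)).
Proof. by move=> x; rewrite /commK -[a * b * x]mulrA; ring. Qed.

Lemma diff_order_leq m n D : (m <= n)%N -> diff_order m D -> diff_order n D.
Proof.
move=> le_mn Dm bs size_bs x.
rewrite -(cat_take_drop (n - m) bs) foldr_cat; apply: foldr_commK_eq0 => {}x.
by apply: Dm; rewrite size_drop size_bs; lia.
Qed.

(* [polyact D y P] is [P] evaluated at the operator [F |-> F (y * _)] and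
   applied to [D], the constants of [P] acting by left multiplication; in
   these terms [commK y] is multiplication by [y - 'X]. *)
Definition polyact D y P : K -> K :=
  fun x => \sum_(i < size P) P`_i * D (y ^+ i * x).

Lemma polyact_widen n D y P x : (size P <= n)%N ->
  polyact D y P x = \sum_(i < n) P`_i * D (y ^+ i * x).
Proof.
move=> le_Pn; rewrite /polyact (big_ord_widen n (fun i => P`_i * D (y ^+ i * x)) le_Pn).
rewrite big_mkcond; apply: eq_bigr => i _.
by case: ltnP => // le_Pi; rewrite nth_default // mul0r.
Qed.

Lemma polyactD D y P Q x : polyact D y (P + Q) x = polyact D y P x + polyact D y Q x.
Proof.
pose n := maxn (size P) (size Q).
rewrite !(@polyact_widen n) ?leq_maxl ?leq_maxr ?(leq_trans (size_polyD _ _)) //.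
by rewrite -big_split; apply: eq_bigr => i _; rewrite coefD mulrDl.
Qed.

Lemma polyactZ D y c P x : polyact D y (c *: P) x = c * polyact D y P x.
Proof.
rewrite (@polyact_widen (size P)) ?size_scale_leq // mulr_sumr.
by apply: eq_bigr => i _; rewrite coefZ mulrA.
Qed.

Lemma polyactB D y P Q x : polyact D y (P - Q) x = polyact D y P x - polyact D y Q x.
Proof. by rewrite -scaleN1r polyactD polyactZ mulN1r. Qed.

Lemma polyact_mulXn D y n P x : polyact D y ('X^n * P) x = polyact D y P (y ^+ n * x).
Proof.
rewrite (@polyact_widen (n + size P)); last first.
  by rewrite (leq_trans (size_polyMleq _ _)) // size_polyXn.
rewrite big_split_ord /= big1 ?add0r => [|i _]; last by rewrite coefXnM ltn_ord mul0r.
apply: eq_bigr => i _; rewrite coefXnM ltnNge leq_addr addKn.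
by rewrite exprD -mulrA mulrCA.
Qed.

Lemma polyact1 D y : polyact D y 1 =1 D.
Proof. by move=> x; rewrite /polyact size_poly1 big_ord1 coefC expr0 !mul1r. Qed.

Lemma commK_polyact D y P :
  commK y (polyact D y P) =1 polyact D y ((y%:P - 'X) * P).
Proof.
by move=> x; rewrite mulrBl mul_polyC polyactB polyactZ -['X]expr1 polyact_mulXn.
Qed.

Lemma foldr_commK_nseq n y D :
  foldr (@commK K) D (nseq n y) =1 polyact D y ((y%:P - 'X) ^+ n).
Proof.
elim: n => [|n IHn] x /=; first by rewrite polyact1.
by rewrite (eq_commK _ IHn) commK_polyact exprS.
Qed.

End Commutators.

Section SubfieldSpan.
Variable K : fieldType.

Record subfield_pred (k : K -> Prop) : Prop := SubfieldPred {
  subfield1 : k 1;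
  subfieldB : forall a b, k a -> k b -> k (a - b);
  subfieldM : forall a b, k a -> k b -> k (a * b);
  subfieldV : forall a, k a -> k a^-1 }.

Variable k : K -> Prop.
Hypothesis k_subfield : subfield_pred k.
Implicit Types (a b c m s t z w : K) (l : seq K) (g D : K -> K) (S : K -> Prop).

Let k1 := subfield1 k_subfield.
Let kB := subfieldB k_subfield.
Let kM := subfieldM k_subfield.
Let kV := subfieldV k_subfield.

Lemma subfield0 : k 0.
Proof. by rewrite -(subrr 1); apply: kB. Qed.

Lemma subfieldN a : k a -> k (- a).
Proof. by move=> ka; rewrite -sub0r; apply: kB => //; apply: subfield0. Qed.

Lemma subfieldD a b : k a -> k b -> k (a + b).
Proof. by move=> ka kb; rewrite -[b]opprK; apply/kB/subfieldN. Qed.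

Fixpoint kspan l z : Prop :=
  if l is m :: l' then exists c s, [/\ k c, kspan l' s & z = c * m + s]
  else z = 0.

Lemma kspan0 l : kspan l 0.
Proof.
elim: l => //= m l IHl; exists 0, 0.
by rewrite mul0r addr0; split=> //; apply: subfield0.
Qed.

Lemma kspanD l z w : kspan l z -> kspan l w -> kspan l (z + w).
Proof.
elim: l z w => [|m l IHl] z w /=; first by move=> -> ->; rewrite addr0.
move=> [c [s [kc ls ->]]] [c' [s' [kc' ls' ->]]].
by exists (c + c'), (s + s'); split; [apply: subfieldD | apply: IHl | ring].
Qed.

Lemma kspanZ l a z : k a -> kspan l z -> kspan l (a * z).
Proof.
move=> ka; elim: l z => [|m l IHl] z /=; first by move->; rewrite mulr0.
move=> [c [s [kc ls ->]]].
by exists (a * c), (a * s); split; [apply: kM | apply: IHl | ring].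
Qed.

Lemma kspanB l z w : kspan l z -> kspan l w -> kspan l (z - w).
Proof.
by move=> lz lw; rewrite -mulN1r; apply/kspanD/kspanZ => //; apply/subfieldN.
Qed.

Lemma kspan_mem l m c : m \in l -> k c -> kspan l (c * m).
Proof.
elim: l => //= m' l IHl; rewrite in_cons => /predU1P[-> | ml] kc.
  by exists c, 0; rewrite addr0; split=> //; apply: kspan0.
by exists 0, (c * m); rewrite mul0r add0r; split=> //; [apply: subfield0 | apply: IHl].
Qed.

Lemma kspan_catl l l' z : kspan l z -> kspan (l ++ l') z.
Proof.
elim: l z => [|m l IHl] z /=; first by move->; apply: kspan0.
by move=> [c [s [kc ls ->]]]; exists c, s; split=> //; apply: IHl.
Qed.

Lemma kspan_catr l l' z : kspan l' z -> kspan (l ++ l') z.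
Proof.
elim: l => //= m l IHl l'z.
by exists 0, z; rewrite mul0r add0r; split=> //; [apply: subfield0 | apply: IHl].
Qed.

Lemma kspan_cons_sub l m z : kspan l m -> kspan (m :: l) z -> kspan l z.
Proof. by move=> lm [c [s [kc ls ->]]]; apply/kspanD/ls/kspanZ. Qed.

Lemma kspan_cons_uniq l m c c' s s' : ~ kspan l m -> k c -> k c' ->
  kspan l s -> kspan l s' -> c * m + s = c' * m + s' -> s = s'.
Proof.
move=> l'm kc kc' ls ls' eq_cs; have [eq_cc' | neq_cc'] := eqVneq c c'.
  by move: eq_cs; rewrite eq_cc' => /addrI.
have : (c - c') * m = s' - s by rewrite mulrBl -[c * m](addrK s) eq_cs; ring.
have nz_cc' : c - c' != 0 by rewrite subr_eq0.
move=> /(canRL (mulKf nz_cc')) m_eq.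
by case: l'm; rewrite m_eq; apply/kspanZ/kspanB => //; apply/kV/kB.
Qed.

Lemma kspan1 z : kspan [:: 1] z <-> k z.
Proof.
split=> [[c [s [kc -> ->]]] | kz]; first by rewrite mulr1 addr0.
by exists z, 0; rewrite mulr1 addr0.
Qed.

Definition klinear_on S g : Prop :=
  (forall z w, S z -> S w -> g (z + w) = g z + g w) /\
  (forall c z, k c -> S z -> g (c * z) = c * g z).

Lemma kspan_cons_proj l m : ~ kspan l m -> exists pr : K -> K,
  forall z c s, k c -> kspan l s -> z = c * m + s -> pr z = s.
Proof.
move=> l'm.
apply: (choice (fun z s => forall c s', k c -> kspan l s' -> z = c * m + s' -> s = s')).
move=> z; have [[c [s [kc ls ->]]] | no_decomp] := classic (kspan (m :: l) z).
  by exists s => c' s' kc' ls' /(kspan_cons_uniq l'm kc kc' ls ls').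
by exists 0 => c s kc ls z_cs; case: no_decomp; exists c, s.
Qed.

Lemma klinear_on_cons l m g : ~ kspan l m -> klinear_on (kspan l) g ->
  exists g', [/\ klinear_on (kspan (m :: l)) g',
                 forall z, kspan l z -> g' z = g z & g' m = 0].
Proof.
move=> l'm [gD gZ]; have [pr prP] := kspan_cons_proj l'm.
have g0 : g 0 = 0.
  by apply: (@addrI _ (g 0)); rewrite -gD ?addr0 //; apply: kspan0.
exists (g \o pr); split=> /= [|z lz|]; last 2 first.
- by rewrite (prP z 0 z) ?mul0r ?add0r //; apply: subfield0.
- by rewrite (prP m 1 0) ?mul1r ?addr0 //; apply: kspan0.
split=> [z w [c [s [kc ls ->]]] [c' [s' [kc' ls' ->]]] | a z ka [c [s [kc ls ->]]]] /=.
  rewrite (prP (c * m + s) c s) // (prP (c' * m + s') c' s') //.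
  by rewrite (prP _ (c + c') (s + s')) ?gD //;
    [apply: subfieldD | apply: kspanD | ring].
rewrite (prP (c * m + s) c s) //.
by rewrite (prP _ (a * c) (a * s)) ?gZ //; [apply: kM | apply: kspanZ | ring].
Qed.

Lemma klinear_on_cat l0 g : klinear_on (kspan l0) g -> forall l,
  exists g', klinear_on (kspan (l ++ l0)) g' /\ forall z, kspan l0 z -> g' z = g z.
Proof.
move=> g_lin; elim=> [|m l [g1 [g1_lin g1g]]]; first by exists g.
have [lm | l'm] := classic (kspan (l ++ l0) m).
  exists g1; split=> //; have sub := kspan_cons_sub lm.
  split=> [z w /sub lz /sub lw | c z kc /sub lz].
  - exact: g1_lin.1.
  - exact: g1_lin.2.
have [g2 [g2_lin g2g1 _]] := klinear_on_cons l'm g1_lin.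
exists g2; split=> // z l0z; rewrite g2g1 ?g1g //; exact: kspan_catr.
Qed.

Lemma exists_klinear_kill ms t : (forall z, kspan ms z) -> ~ k t ->
  exists D, [/\ klinear k D, D t = 0 & D 1 = 1].
Proof.
move=> ms_span k't.
have id_lin : klinear_on (kspan [:: 1]) id by [].
have k't' : ~ kspan [:: 1] t by move/kspan1.
have [g1 [g1_lin g1_id g1t]] := klinear_on_cons k't' id_lin.
have [D [D_lin Dg1]] := klinear_on_cat g1_lin ms.
have all_span z : kspan (ms ++ [:: t; 1]) z by apply: kspan_catl.
exists D; split.
- by split=> [z w | c z kc]; [apply: D_lin.1 | apply: D_lin.2].
- by rewrite Dg1 //; exists 1, 0; rewrite mul1r addr0; split=> //; apply: kspan0.
rewrite Dg1 ?g1_id //; first by apply/kspan1.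
by exists 0, 1; rewrite mul0r add0r; split=> //; [apply: subfield0 | apply/kspan1].
Qed.

End SubfieldSpan.

Lemma exprB_pchar (R : comNzRingType) p e (a b : R) : p \in [pchar R] ->
  (a - b) ^+ (p ^ e) = a ^+ (p ^ e) - b ^+ (p ^ e).
Proof.
move=> charRp; have pe : [pchar R].-nat (p ^ e)%N.
  by rewrite (eq_pnat _ (pcharf_eq charRp)) pnatX pnat_id // (pcharf_prime charRp).
by rewrite exprDn_pchar // exprNn_pchar.
Qed.

Section Powers.
Variable K : fieldType.
Implicit Types (a b x : K) (D : K -> K).

Definition is_power (q : nat) x : Prop := exists y, y ^+ q = x.

Definition pow_linear (q : nat) D : Prop := forall b x, D (b ^+ q * x) = b ^+ q * D x.

Variable p : nat.
Hypothesis charKp : p \in [pchar K].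

Lemma foldr_commK_nseq_pchar e b D :
  foldr (@commK K) D (nseq (p ^ e) b) =1
  (fun x => b ^+ (p ^ e) * D x - D (b ^+ (p ^ e) * x)).
Proof.
move=> x; rewrite foldr_commK_nseq exprB_pchar ?pchar_poly // -polyC_exp.
rewrite -['X^_]mulr1 -[_%:P]mulr1 mul_polyC polyactB polyactZ polyact_mulXn.
by rewrite !polyact1.
Qed.

Lemma pow_linear_diff_order n e D : diff_order n D -> (n < p ^ e)%N ->
  pow_linear (p ^ e) D.
Proof.
move=> Dn lt_n_pe b x; apply/eqP; rewrite eq_sym -subr_eq0.
have Dpe : diff_order (p ^ e).-1 D by apply: diff_order_leq Dn; lia.
by rewrite -foldr_commK_nseq_pchar Dpe // size_nseq; lia.
Qed.

Lemma is_power_subfield e : subfield_pred (is_power (p ^ e)).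
Proof.
split=> [|_ _ [a <-] [b <-]|_ _ [a <-] [b <-]|_ [a <-]].
- by exists 1; rewrite expr1n.
- by exists (a - b); rewrite exprB_pchar.
- by exists (a * b); rewrite exprMn.
- by exists a^-1; rewrite exprVn.
Qed.

Lemma expr_pchar_inj e : injective (fun x : K => x ^+ (p ^ e)).
Proof.
move=> a b /= eq_ab; apply/eqP; rewrite -subr_eq0.
have : (a - b) ^+ (p ^ e) == 0 by rewrite exprB_pchar // eq_ab subrr.
by rewrite expf_eq0 => /andP[].
Qed.

Lemma exists_not_is_power :
  (exists x, ~ perfect_core p x) -> exists u : K, ~ is_power p u.
Proof.
move=> [x x_notin]; apply: (not_all_ex_not _ (is_power p)) => all_p.
apply: x_notin; elim=> [|e IHe]; first by exists x; rewrite expr1.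
have [y <-] := IHe; have [z <-] := all_p y.
by exists z; rewrite expnS exprM.
Qed.

Lemma is_power_expr_pchar e u :
  is_power (p ^ e.+1) (u ^+ (p ^ e)) -> is_power p u.
Proof.
by move=> [z]; rewrite expnS exprM => /expr_pchar_inj zp_u; exists z.
Qed.

End Powers.

Section Monomials.
Variables (K : fieldType) (k : K -> Prop) (q : nat) (xs : seq K).
Hypotheses (k_subfield : subfield_pred k) (q_gt0 : (0 < q)%N).
Hypothesis k_pow : forall z, k (z ^+ q).
Local Notation r := (size xs).
Implicit Types (a c z w : K) (f g : 'I_r -> nat).

Definition mono f : K := \prod_(i < r) xs`_i ^+ f i.

Lemma mono0 : mono (fun=> 0%N) = 1.
Proof. by rewrite /mono big1 // => i _; rewrite expr0. Qed.

Lemma monoM f g : mono f * mono g = mono (fun i => f i + g i)%N.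
Proof. by rewrite /mono -big_split; apply: eq_bigr => i _; rewrite exprD. Qed.

Lemma mono_delta (i : 'I_r) : mono (fun j => (j == i) : nat) = xs`_i.
Proof.
rewrite /mono (bigD1 i) //= eqxx expr1 big1 ?mulr1 // => j /negbTE ->.
by rewrite expr0.
Qed.

Lemma mono_divmod f :
  mono f = mono (fun i => f i %/ q)%N ^+ q * mono (fun i => f i %% q)%N.
Proof.
rewrite /mono -prodrXl -big_split; apply: eq_bigr => i _ /=.
by rewrite -exprM -exprD -divn_eq.
Qed.

Inductive mono_span : K -> Prop :=
| mono_span_term c f : k c -> mono_span (c * mono f)
| mono_span_add z w : mono_span z -> mono_span w -> mono_span (z + w).

Lemma mono_span_const c : k c -> mono_span c.
Proof. by move=> kc; rewrite -[c]mulr1 -mono0; constructor. Qed.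

Lemma mono_span_nth (i : 'I_r) : mono_span xs`_i.
Proof.
by rewrite -mono_delta -[mono _]mul1r; constructor; apply: (subfield1 k_subfield).
Qed.

Lemma mono_spanZ a z : k a -> mono_span z -> mono_span (a * z).
Proof.
move=> ka; elim=> [c f kc | z1 z2 _ IH1 _ IH2]; last by rewrite mulrDr; constructor.
by rewrite mulrA; constructor; apply: (subfieldM k_subfield).
Qed.

Lemma mono_spanM z w : mono_span z -> mono_span w -> mono_span (z * w).
Proof.
elim=> [c f kc | z1 z2 _ IH1 _ IH2] w_span; last by rewrite mulrDl; constructor; auto.
elim: w_span => [c' g kc' | w1 w2 _ IH1 _ IH2]; last by rewrite mulrDr; constructor.
by rewrite mulrACA monoM; constructor; apply: (subfieldM k_subfield).
Qed.

Lemma mono_spanX z n : mono_span z -> mono_span (z ^+ n).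
Proof.
move=> z_span; elim: n => [|n IHn]; last by rewrite exprS; apply: mono_spanM.
by rewrite expr0; apply/mono_span_const/(subfield1 k_subfield).
Qed.

Lemma mono_spanV z : mono_span z -> mono_span z^-1.
Proof.
move=> z_span; have [-> | nz_z] := eqVneq z 0.
  by rewrite invr0; apply/mono_span_const/(subfield0 k_subfield).
have -> : z^-1 = (z ^+ q)^-1 * z ^+ (q - 1).
  by rewrite -[in z ^+ q](subnK q_gt0) addn1 exprS invfM -mulrA mulVf ?mulr1 ?expf_neq0.
by apply: mono_spanZ (mono_spanX _ z_span); apply: (subfieldV k_subfield).
Qed.

Lemma field_gen_mono_span (k' : K -> Prop) z : (forall c, k' c -> k c) ->
  field_gen k' xs z -> mono_span z.
Proof.
move=> k'k; elim=> {z} [c /k'k | x x_xs | | z _ IH | | z _ IH].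
- exact: mono_span_const.
- have x_idx : (index x xs < r)%N by rewrite index_mem.
  by rewrite -(nth_index 0 x_xs); apply: (mono_span_nth (Ordinal x_idx)).
- by move=> z w _ IHz _ IHw; constructor.
- rewrite -mulN1r; apply: mono_spanZ IH.
  by apply: (subfieldN k_subfield); apply: (subfield1 k_subfield).
- by move=> z w _ IHz _ IHw; apply: mono_spanM.
- exact: mono_spanV.
Qed.

Definition reduced_monos : seq K :=
  [seq mono (fun i => f i : nat) | f : {ffun 'I_r -> 'I_q}].

Lemma mono_span_kspan z : mono_span z -> kspan k reduced_monos z.
Proof.
elim=> {z} [c f kc | z w _ IHz _ IHw]; last exact: kspanD.
pose f_mod := [ffun i => Ordinal (ltn_pmod (f i) q_gt0)] : {ffun 'I_r -> 'I_q}.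
rewrite mono_divmod mulrA.
have -> : mono (fun i => f i %% q)%N = mono (fun i => f_mod i : nat).
  by apply: eq_bigr => i _; rewrite ffunE.
apply: kspan_mem => //; first exact: image_f.
exact: (subfieldM k_subfield).
Qed.

End Monomials.

Lemma sum_count_mem (T : finType) (s : seq T) :
  (\sum_(i : T) count_mem i s)%N = size s.
Proof.
elim: s => [|x s IHs] /=; first by rewrite big1.
rewrite big_split /= IHs (bigD1 x) //= eqxx big1 ?add1n // => i /negbTE.
by rewrite eq_sym => ->.
Qed.

Lemma pigeonhole_count (T : finType) (s : seq T) n :
  (#|T| * n < size s)%N -> exists i, (n < count_mem i s)%N.
Proof.
have [/existsP[i] | /existsPn le_n] := boolP [exists i, n < count_mem i s]%N.
  by exists i.
rewrite -sum_count_mem -sum_nat_const ltnNge leq_sum // => i _.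
by rewrite leqNgt le_n.
Qed.

Section OrderBound.
Variables (K : fieldType) (k : K -> Prop) (p e : nat) (xs : seq K).
Hypothesis charKp : p \in [pchar K].
Hypothesis k_pow : forall z, k (z ^+ (p ^ e)).
Local Notation q := (p ^ e)%N.
Local Notation r := (size xs).
Implicit Types (a b c z : K) (E F : K -> K) (n : nat).

Definition gen_order_lt n E : Prop :=
  forall P : seq 'I_r, (n <= size P)%N ->
  forall x, foldr (@commK K) E [seq xs`_i | i : 'I_r <- P] x = 0.

Lemma gen_order_lt_eq n E F : E =1 F -> gen_order_lt n E -> gen_order_lt n F.
Proof. by move=> eEF En P le_nP x; rewrite -(eq_foldr_commK _ eEF) En. Qed.

Lemma gen_order_lt_add n E F : gen_order_lt n E -> gen_order_lt n F ->
  gen_order_lt n (fun x => E x + F x).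
Proof. by move=> En Fn P le_nP x; rewrite foldr_commK_add En ?Fn ?addr0. Qed.

Lemma gen_order_lt_mull n a E :
  gen_order_lt n E -> gen_order_lt n (fun x => a * E x).
Proof. by move=> En P le_nP x; rewrite foldr_commK_mull En ?mulr0. Qed.

Lemma gen_order_lt_mulr n a E :
  gen_order_lt n E -> gen_order_lt n (fun x => E (a * x)).
Proof. by move=> En P le_nP x; rewrite foldr_commK_mulr En. Qed.

Definition lowers_order a : Prop :=
  forall n E, gen_order_lt n.+1 E -> gen_order_lt n (commK a E).

Lemma lowers_order_nth (i : 'I_r) : lowers_order xs`_i.
Proof. by move=> n E En P le_nP x; rewrite foldr_commK_commK; apply: (En (i :: P)). Qed.

Lemma lowers_order1 : lowers_order 1.
Proof.
move=> n E _ P _ x; rewrite foldr_commK_eq0 // => y.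
by rewrite /commK !mul1r subrr.
Qed.

Lemma lowers_orderM a b : lowers_order a -> lowers_order b -> lowers_order (a * b).
Proof.
move=> la lb n E En; apply: gen_order_lt_eq (fsym (commKM a b E)) _.
by apply: gen_order_lt_add; [apply/gen_order_lt_mull/lb | apply/gen_order_lt_mulr/la].
Qed.

Lemma lowers_order_mono (f : 'I_r -> nat) : lowers_order (mono f).
Proof.
apply: (big_ind lowers_order lowers_order1 lowers_orderM) => i _.
elim: (f i) => [|m IHm]; first by rewrite expr0; apply: lowers_order1.
by rewrite exprS; apply: lowers_orderM => //; apply: lowers_order_nth.
Qed.

Lemma klinear_commK b E : klinear k E -> klinear k (commK b E).
Proof.
move=> [ED EZ]; split=> [x y | c x kc]; rewrite /commK.
  by rewrite mulrDr !ED; ring.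
by rewrite (EZ c x) // [b * (c * x)]mulrCA (EZ c (b * x)) //; ring.
Qed.

Lemma commK_scale c a E : klinear k E -> k c ->
  commK (c * a) E =1 (fun x => c * commK a E x).
Proof. by move=> [_ EZ] kc x; rewrite /commK -[c * a * x]mulrA EZ //; ring. Qed.

Lemma gen_order_lt_commK n b E : klinear k E -> mono_span k xs b ->
  gen_order_lt n.+1 E -> gen_order_lt n (commK b E).
Proof.
move=> E_lin; elim=> {b} [c f kc | z w _ IHz _ IHw] En.
  apply: gen_order_lt_eq (fsym (commK_scale _ E_lin kc)) _.
  exact/gen_order_lt_mull/lowers_order_mono.
apply: gen_order_lt_eq (fsym (commKD z w E_lin.1)) _.
by apply: gen_order_lt_add; [apply: IHz | apply: IHw].
Qed.

Lemma gen_order_lt_klinear E : klinear k E -> gen_order_lt (r * (q - 1)).+1 E.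
Proof.
move=> [_ EZ] P lt_P x.
have [i lt_q_Pi] : exists i, (q - 1 < count_mem i P)%N.
  by apply: pigeonhole_count; rewrite card_ord.
have Pi : filter (pred1 i) P = nseq (count_mem i P) i.
  by rewrite -size_filter; apply/all_pred1P; apply: filter_all.
have perm_P : perm_eq P (filter (predC (pred1 i)) P ++ filter (pred1 i) P).
  by rewrite perm_sym perm_catC perm_filterC.
rewrite (perm_foldr_commK _ (perm_map _ perm_P)) map_cat foldr_cat.
apply: foldr_commK_eq0 => {}x; rewrite Pi map_nseq.
rewrite -(subnK (_ : q <= count_mem i P)%N); last by lia.
rewrite nseqD foldr_cat; apply: foldr_commK_eq0 => {}x.
by rewrite foldr_commK_nseq_pchar // EZ ?subrr.
Qed.

Lemma gen_order_lt_foldr bs n E : klinear k E -> (forall z, mono_span k xs z) ->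
  gen_order_lt (size bs + n) E -> gen_order_lt n (foldr (@commK K) E bs).
Proof.
move=> + K_span; elim: bs E => //= b bs IHbs E E_lin En.
apply: gen_order_lt_eq (foldr_commK_commK bs b E) _.
by apply: IHbs; [apply: klinear_commK | apply: gen_order_lt_commK].
Qed.

Lemma klinear_diff_order E : klinear k E -> (forall z, mono_span k xs z) ->
  diff_order (r * (q - 1)) E.
Proof.
move=> E_lin K_span bs size_bs x.
have En : gen_order_lt (size bs + 0) E.
  by rewrite addn0 size_bs; apply: gen_order_lt_klinear.
exact: (gen_order_lt_foldr E_lin K_span En (P := [::]) (leqnn 0) x).
Qed.

Lemma klinear_is_diffop (k0 : K -> Prop) E : (forall c, k0 c -> k c) ->
  klinear k E -> (forall z, mono_span k xs z) -> is_diffop k0 E.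
Proof.
move=> k0k E_lin K_span; split; last by eexists; apply: klinear_diff_order.
by split=> [|c x /k0k kc]; [apply: E_lin.1 | apply: E_lin.2].
Qed.

End OrderBound.

Section FiniteGeneration.
Variable K : fieldType.

Lemma alg_gen_pow_linear q m (gens : 'I_m -> K -> K) E :
  (forall i, pow_linear q (gens i)) -> alg_gen gens E -> pow_linear q E.
Proof.
move=> gens_lin; elim=> {E} [a | i | D E _ IHD _ IHE | D E _ IHD _ IHE] b x /=.
- by rewrite mulrCA.
- exact: gens_lin.
- by rewrite IHD IHE mulrDr.
- by rewrite IHE IHD.
Qed.

Lemma common_diff_order (k : K -> Prop) m (gens : 'I_m -> K -> K) :
  (forall i, is_diffop k (gens i)) -> exists n, forall i, diff_order n (gens i).
Proof.
move=> gens_diff.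
have /fin_all_exists[ord gens_ord] : forall i, exists n, diff_order n (gens i).
  by move=> i; have [_] := gens_diff i.
by exists (\max_i ord i) => i; apply: diff_order_leq (gens_ord i); apply: leq_bigmax.
Qed.

End FiniteGeneration.

Theorem mainTheorem16 (K : fieldType) (p : nat) :
  p \in [pchar K] ->
  fin_gen_ext (@perfect_core K p) ->
  (exists x : K, ~ @perfect_core K p x) ->
  ~ diff_fin_gen (@perfect_core K p).
Proof.
move=> charKp [xs K_gen] /exists_not_is_power[u u_notp].
move=> [m [gens [gens_diff gens_span]]].
have p_prime := pcharf_prime charKp.
have [n gens_ord] := common_diff_order gens_diff.
have gens_lin i : pow_linear (p ^ n) (gens i).
  exact (pow_linear_diff_order charKp (gens_ord i) (ltn_expl n (prime_gt1 p_prime))).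
pose k := @is_power K (p ^ n.+1).
have k_subfield : subfield_pred k := is_power_subfield charKp n.+1.
have k_pow z : k (z ^+ (p ^ n.+1)) by exists z.
have q_gt0 : (0 < p ^ n.+1)%N by rewrite expn_gt0 prime_gt0.
have core_k c : perfect_core p c -> k c by apply.
have K_span z : mono_span k xs z.
  exact (field_gen_mono_span k_subfield q_gt0 k_pow core_k (K_gen z)).
have K_kspan z : kspan k (reduced_monos (p ^ n.+1) xs) z.
  exact (mono_span_kspan k_subfield q_gt0 k_pow (K_span z)).
have t_notin : ~ k (u ^+ (p ^ n)) by move/(is_power_expr_pchar charKp).
have [D [D_lin Dt D1]] := exists_klinear_kill k_subfield K_kspan t_notin.
have D_diff := klinear_is_diffop charKp k_pow core_k D_lin K_span.
have [E [E_gen E_D]] := gens_span D D_diff.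
have := alg_gen_pow_linear gens_lin E_gen u 1.
rewrite mulr1 !E_D Dt D1 mulr1 => t0.
by apply: t_notin; rewrite -t0; apply: (subfield0 k_subfield).
Qed.
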